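(* Let $\psi$ satisfy $0<c_\psi\le\psi(X_i,Y_j)\le C_\psi$ for all $i,j$. Then for each $i$ the cell problem has a unique solution $\chi(X_i,\cdot)\in U^p_\#(\mathbb Z)$. Moreover $\chi(X_{i+N},Y_j)=\chi(X_i,Y_j)$ for all $i,j$, i.e. $\chi\in U^N_{\rm per}(\epsilon\mathbb Z)\otimes U^p_\#(\mathbb Z)$.
   Context: Let $\epsilon>0$ and $N,p$ positive integers; $X_i=\epsilon i$, $Y_j=j$. $U^p_\#(\mathbb Z)$ is the space of $p$-periodic functions $s:\mathbb Z\to\mathbb R$ with $\sum_{j=1}^ps(Y_j)=0$. $\psi:\epsilon\mathbb Z\times\mathbb Z\to\mathbb R$ satisfies $\psi(X_{i+N},Y_j)=\psi(X_i,Y_j)=\psi(X_i,Y_{j+p})$. For a function $g$ of $(X_i,Y_j)$, $D_Yg(X_i,Y_j)=g(X_i,Y_{j+1})-g(X_i,Y_j)$. The cell problem at $X_i$: find a $p$-periodic function $\chi(X_i,\cdot)$ on $\mathbb Z$ with $\frac1p\sum_{j=1}^p\chi(X_i,Y_j)=0$ and $-D_Y(\psi D_Y\chi)(X_i,Y_j)=D_Y\psi(X_i,Y_j)$ for all $j\in\mathbb Z$. *)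

From HB Require Import structures.
From mathcomp Require Import all_boot all_order all_algebra.
Set Implicit Arguments. Unset Strict Implicit. Unset Printing Implicit Defensive.
Import Order.TTheory GRing.Theory Num.Theory.
Local Open Scope ring_scope.

Definition Xg (R : realFieldType) (eps : R) (i : int) : R := eps * i%:~R.
Definition Yg (R : realFieldType) (j : int) : R := j%:~R.

Definition DY (R : realFieldType) (g : int -> int -> R) (i j : int) : R :=
  g i (j + 1)%R - g i j.

Definition psig (R : realFieldType) (eps : R) (psi : R -> R -> R)
  (i j : int) : R := psi (Xg eps i) (Yg R j).

(* s : Z -> R is a solution of the cell problem at X_i:
   s is p-periodic, (1/p) sum_{j=1}^p s(Y_j) = 0, and
   - D_Y (psi D_Y chi)(X_i, Y_j) = D_Y psi (X_i, Y_j) for all j,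
   where chi(X_i, .) = s. *)
Definition cell_solution (R : realFieldType) (eps : R) (p : nat)
  (psi : R -> R -> R) (i : int) (s : int -> R) : Prop :=
  (forall j : int, s (j + p%:Z)%R = s j) /\
  (p%:R^-1 * \sum_(1 <= j < p.+1) s j%:Z = 0) /\
  (forall j : int,
     - DY (fun i' j' => psig eps psi i' j' * DY (fun _ j'' => s j'') i' j') i j
     = DY (psig eps psi) i j).

(* The cell equation says that the flux a j * (s (j + 1) - s j + 1), with
   a := psi(X_i, .), does not depend on j.  Hence s (j + 1) - s j = c / a j - 1,
   and p-periodicity of s forces these steps to sum to 0 over a period, which
   pins c down to the harmonic mean of a over a period.  So s is determined up
   to an additive constant, which the zero-mean condition fixes.  The solution
   depends on i only through psi(X_i, .), hence is N-periodic in i. *)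
From HB Require Import structures.
From mathcomp Require Import all_boot all_order all_algebra.
From mathcomp Require Import zify ring lra.
Import Order.TTheory GRing.Theory Num.Theory.
Set Implicit Arguments. Unset Strict Implicit.
Local Open Scope ring_scope.

Lemma periodic_mulz (T : Type) (g : int -> T) (d : int) :
  (forall j, g (j + d) = g j) -> forall k j, g (j + k * d) = g j.
Proof.
move=> gd; elim/int_rect => [j|n IH j|n IH j]; first by rewrite mul0r addr0.
- by rewrite -addn1 PoszD mulrDl mul1r addrA gd.
- rewrite -addn1 PoszD opprD mulrDl mulN1r addrA -(IH j).
  by rewrite -[in RHS](addrNK d (j + - n%:Z * d)) gd.
Qed.

Lemma constant_of_step (T : Type) (g : int -> T) :
  (forall j, g (j + 1) = g j) -> forall j, g j = g 0.
Proof. by move=> g1 j; rewrite -(periodic_mulz g1 j 0) add0r mulr1. Qed.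

Lemma periodic_modz (T : Type) (g : int -> T) (d : int) :
  (forall j, g (j + d) = g j) -> forall j, g j = g (j %% d)%Z.
Proof. by move=> gd j; rewrite {1}(divz_eq j d) addrC periodic_mulz. Qed.

Definition period_mean (R : realFieldType) (p : nat) (s : int -> R) : R :=
  p%:R^-1 * \sum_(1 <= j < p.+1) s j%:Z.

Definition cell_eq (R : realFieldType) (a s : int -> R) : Prop :=
  forall j,
    - (a (j + 1) * (s (j + 1 + 1) - s (j + 1)) - a j * (s (j + 1) - s j))
    = a (j + 1) - a j.

Definition flux (R : realFieldType) (a s : int -> R) (j : int) : R :=
  a j * (s (j + 1) - s j + 1).

Lemma cell_eqE (R : realFieldType) (a s : int -> R) :
  cell_eq a s <-> forall j, flux a s (j + 1) = flux a s j.
Proof. by split=> E j; have := E j; rewrite /flux; lra. Qed.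

Lemma eq_period_mean (R : realFieldType) (p : nat) (s t : int -> R) :
  (forall j, s j = t j) -> period_mean p s = period_mean p t.
Proof. by move=> st; congr (_ * _); apply: eq_bigr => k _. Qed.

Lemma period_meanB (R : realFieldType) (p : nat) (s t : int -> R) :
  period_mean p (fun j => s j - t j) = period_mean p s - period_mean p t.
Proof. by rewrite /period_mean sumrB mulrBr. Qed.

Lemma period_mean_cst (R : realFieldType) (p : nat) (c : R) :
  (0 < p)%N -> period_mean p (fun=> c) = c.
Proof.
move=> p_gt0; rewrite /period_mean sumr_const_nat subSS subn0 -(mulr_natl c).
by rewrite mulKf // pnatr_eq0 -lt0n.
Qed.

Lemma eq_of_step_mean (R : realFieldType) (p : nat) (s t : int -> R) :
  (0 < p)%N -> (forall j, s (j + 1) - s j = t (j + 1) - t j) ->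
  period_mean p s = period_mean p t -> forall j, s j = t j.
Proof.
move=> p_gt0 st mean_st j.
have diffK : forall k, s k - t k = s 0 - t 0.
  by apply: (@constant_of_step _ (fun k => s k - t k)) => k; have := st k; lra.
have := period_meanB p s t; rewrite mean_st subrr (eq_period_mean _ diffK).
by rewrite period_mean_cst // => /eqP; rewrite -(diffK j) subr_eq0 => /eqP.
Qed.

Section CellProblem.
Variables (R : realFieldType) (p : nat) (a : int -> R).
Hypothesis p_gt0 : (0 < p)%N.
Hypothesis a_gt0 : forall j, 0 < a j.
Hypothesis a_periodic : forall j, a (j + p%:Z) = a j.

Definition inv_sum : R := \sum_(k < p) (a k%:Z)^-1.

Definition harmonic_mean : R := p%:R / inv_sum.

Definition cell_slope (j : int) : R := harmonic_mean / a j - 1.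

Lemma inv_sum_gt0 : 0 < inv_sum.
Proof.
rewrite /inv_sum; case: p p_gt0 => // n _.
rewrite big_ord_recr /=; apply: ltr_wpDl; last by rewrite invr_gt0.
by apply: sumr_ge0 => i _; rewrite invr_ge0 ltW.
Qed.

Lemma sum_steps (c : R) :
  \sum_(k < p) (c / a k%:Z - 1) = c * inv_sum - p%:R.
Proof. by rewrite sumrB mulr_sumr sumr_const card_ord. Qed.

Lemma sum_cell_slope : \sum_(k < p) cell_slope k%:Z = 0.
Proof.
by rewrite sum_steps /harmonic_mean mulfVK ?subrr // gt_eqF ?inv_sum_gt0.
Qed.

Lemma cell_eq_slope (s : int -> R) :
  (forall j, s (j + p%:Z) = s j) -> cell_eq a s ->
  forall j, s (j + 1) - s j = cell_slope j.
Proof.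
move=> s_periodic /cell_eqE /constant_of_step fluxK.
set c := flux a s 0.
have step j : s (j + 1) - s j = c / a j - 1.
  by rewrite /c -(fluxK j) /flux [a j * _]mulrC mulfK ?addrK ?gt_eqF.
have telescope : c * inv_sum - p%:R = 0.
  rewrite -sum_steps -[RHS](subrr (s 0)).
  rewrite -{1}[s 0]s_periodic add0r.
  rewrite -(telescope_sumr (fun k : nat => s k%:Z)) //.
  by rewrite big_mkord; apply: eq_bigr => k _; rewrite -step -addn1 PoszD.
have c_mean : c = harmonic_mean.
  apply: (mulIf (x := inv_sum)); first by rewrite gt_eqF ?inv_sum_gt0.
  by rewrite mulfVK ?gt_eqF ?inv_sum_gt0 //; lra.
by move=> j; rewrite step c_mean.
Qed.

Lemma slope_cell_eq (s : int -> R) :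
  (forall j, s (j + 1) - s j = cell_slope j) -> cell_eq a s.
Proof.
move=> step; apply/cell_eqE => j; rewrite /flux !step /cell_slope !subrK.
by rewrite [LHS]mulrC [RHS]mulrC !mulfVK ?gt_eqF.
Qed.

(* The primitive of cell_slope is read off the residue of j modulo p; it closes
   up across a period because cell_slope sums to 0 there. *)
Definition cell_primitive (j : int) : R :=
  \sum_(k < `|(j %% p%:Z)%Z|%N) cell_slope k%:Z.

Lemma cell_primitive_step j :
  cell_primitive (j + 1) - cell_primitive j = cell_slope j.
Proof.
set r := `|(j %% p%:Z)%Z|%N.
have jr : (j %% p%:Z)%Z = r%:Z by rewrite gez0_abs // modz_ge0 //; lia.
have r_lt : (r < p)%N by have := @ltz_pmod j p%:Z; rewrite jr !ltz_nat; apply.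
have -> : cell_slope j = cell_slope r%:Z.
  by rewrite /cell_slope (periodic_modz a_periodic j) jr.
rewrite /cell_primitive -/r -modzDml jr.
have [r1_lt | r1_ge] := ltnP r.+1 p.
  rewrite modz_small; last by apply/andP; split; lia.
  have -> : `|(r%:Z + 1)%R|%N = r.+1 by lia.
  by rewrite big_ord_recr /= addrAC subrr add0r.
have r1 : r.+1 = p by lia.
have -> : r%:Z + 1 = p%:Z by lia.
rewrite modzz big_ord0.
have := sum_cell_slope; rewrite -r1 big_ord_recr /=; lra.
Qed.

Definition cell_corrector (j : int) : R :=
  cell_primitive j - period_mean p cell_primitive.

Lemma cell_corrector_step j :
  cell_corrector (j + 1) - cell_corrector j = cell_slope j.
Proof. by rewrite /cell_corrector -cell_primitive_step; ring. Qed.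

Lemma cell_corrector_periodic j : cell_corrector (j + p%:Z) = cell_corrector j.
Proof. by rewrite /cell_corrector /cell_primitive modzDr. Qed.

Lemma cell_corrector_mean : period_mean p cell_corrector = 0.
Proof. by rewrite period_meanB period_mean_cst ?subrr. Qed.

Lemma cell_corrector_eq : cell_eq a cell_corrector.
Proof. exact: slope_cell_eq cell_corrector_step. Qed.

Lemma cell_corrector_unique (s : int -> R) :
  (forall j, s (j + p%:Z) = s j) -> period_mean p s = 0 -> cell_eq a s ->
  forall j, s j = cell_corrector j.
Proof.
move=> s_periodic s_mean s_eq; apply: (eq_of_step_mean p_gt0) => [j|].
  by rewrite cell_corrector_step (cell_eq_slope s_periodic s_eq).
by rewrite s_mean cell_corrector_mean.
Qed.

End CellProblem.

Theorem proposition4p2 (R : realFieldType) (eps : R) (N p : nat)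
  (psi : R -> R -> R) (c_psi C_psi : R) :
  0 < eps -> (0 < N)%N -> (0 < p)%N ->
  (forall i j : int,
     psi (Xg eps (i + N%:Z)) (Yg R j) = psi (Xg eps i) (Yg R j) /\
     psi (Xg eps i) (Yg R j) = psi (Xg eps i) (Yg R (j + p%:Z))) ->
  0 < c_psi ->
  (forall i j : int,
     c_psi <= psi (Xg eps i) (Yg R j) /\ psi (Xg eps i) (Yg R j) <= C_psi) ->
  exists chi : int -> int -> R,
    (forall i : int, cell_solution eps p psi i (chi i)) /\
    (forall (i : int) (s : int -> R),
       cell_solution eps p psi i s -> forall j : int, s j = chi i j) /\
    (forall i j : int, chi (i + N%:Z) j = chi i j).
Proof.
move=> _ _ p_gt0 psi_periodic c_gt0 psi_bounds.
pose a := psig eps psi.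
have a_gt0 i j : 0 < a i j by apply: lt_le_trans c_gt0 (proj1 (psi_bounds i j)).
have a_periodic i j : a i (j + p%:Z) = a i j.
  by rewrite /a /psig -(proj2 (psi_periodic i j)).
have a_periodicN i j : a (i + N%:Z) j = a i j.
  by rewrite /a /psig (proj1 (psi_periodic i j)).
pose chi i := cell_corrector p (a i).
(* Up to conversion, cell_solution is periodicity, zero period_mean and
   cell_eq (a i). *)
have chi_sol i : cell_solution eps p psi i (chi i).
  split; [exact: cell_corrector_periodic | split].
  - exact: cell_corrector_mean.
  - exact: cell_corrector_eq.
have chi_unique i s : cell_solution eps p psi i s -> forall j, s j = chi i j.
  by case=> s_periodic [s_mean s_eq]; exact: cell_corrector_unique.
exists chi; split=> //; split=> // i j.
apply: chi_unique; have [chi_periodic [chi_mean chi_eq]] := chi_sol (i + N%:Z).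
by split=> //; split=> // k; have := chi_eq k; rewrite /DY /= -/a !a_periodicN.
Qed.
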